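(* Let $(\mathfrak{g}_0,[\cdot,\cdot]_0,\langle\cdot,\cdot\rangle_0)$ be a Euclidean Lie algebra, let $\mu\in\mathbb{R}$, $b\in\mathfrak{g}_0$, and let $K,D:\mathfrak{g}_0\to\mathfrak{g}_0$ be endomorphisms with $K$ skew-symmetric. Let $\mathfrak{g}=\mathbb{R}e\oplus\mathfrak{g}_0\oplus\mathbb{R}\bar e$ with the Lorentzian form $\langle\cdot,\cdot\rangle$ given by $\langle e,e\rangle=\langle\bar e,\bar e\rangle=0$, $\langle e,\bar e\rangle=1$, $\mathfrak{g}_0\perp\{e,\bar e\}$, $\langle\cdot,\cdot\rangle|_{\mathfrak{g}_0}=\langle\cdot,\cdot\rangle_0$, and the skew-symmetric bracket determined by $$[\bar e,e]=\mu e,\quad [\bar e,u]=D(u)+\langle b,u\rangle_0\,e,\quad [u,v]=[u,v]_0+\langle K(u),v\rangle_0\,e,\qquad [e,u]=0,$$ for $u,v\in\mathfrak{g}_0$. Let $\mathrm{ad}^0$ denote the adjoint representation of $\mathfrak{g}_0$. (1) Let $\omega(u,v)=\langle K(u),v\rangle_0$. Then $(\mathfrak{g},[\cdot,\cdot])$ is a Lie algebra if and only if $D$ is a derivation of $\mathfrak{g}_0$, $\omega$ is a $2$-cocycle of $\mathfrak{g}_0$ with values in $\mathbb{R}$ (trivial module), and $KD+D^*K=\mu K+J^0_b$, where $J^0_u(v)=(\mathrm{ad}^0_v)^*(u)$ for $u,v\in\mathfrak{g}_0$. (2) Assume $\mathfrak{g}$ is a Lie algebra, and let $H\in\mathfrak{g}$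 and $H^0\in\mathfrak{g}_0$ be defined by $\mathrm{tr}(\mathrm{ad}_u)=\langle H,u\rangle$ for all $u\in\mathfrak{g}$ and $\mathrm{tr}(\mathrm{ad}^0_v)=\langle H^0,v\rangle_0$ for all $v\in\mathfrak{g}_0$. Then $H=(\mu+\mathrm{tr}(D))e+H^0$. In particular $\mathfrak{g}$ is unimodular if and only if $\mathfrak{g}_0$ is unimodular and $\mathrm{tr}(D)=-\mu$.
   Context: A Euclidean Lie algebra is a finite-dimensional real Lie algebra with a positive definite inner product. Adjoints $F^*$ are taken with respect to $\langle\cdot,\cdot\rangle_0$. Unimodular means all $\mathrm{ad}_u$ are traceless. The bracket not listed ($[e,e]$, $[e,u]$) is zero; the bracket with $e$ is as given. *)

(* Euclidean Lie algebra g0 = 'rV[R]_n with inner product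
   <u,v>_0 = u *m S *m v^T, S symmetric positive definite.
   Endomorphisms of g0 are matrices acting on the right: F(u) = u *m F. *)
From HB Require Import structures.
From mathcomp Require Import all_boot all_order all_algebra.
Set Implicit Arguments. Unset Strict Implicit. Unset Printing Implicit Defensive.
Import Order.TTheory GRing.Theory Num.Theory.
Local Open Scope ring_scope.

Section Defs.
Variable R : realFieldType.

Definition ip (n : nat) (S : 'M[R]_n) (u v : 'rV[R]_n) : R := (u *m S *m v^T) 0 0.

Definition euclidean_form (n : nat) (S : 'M[R]_n) : Prop :=
  S^T = S /\ (forall u : 'rV[R]_n, u != 0 -> 0 < ip S u u).

(* adjoint of F (acting by u |-> u *m F) w.r.t. ip S:  ip S (u *m F) v = ip S u (v *m adj S F) *)
Definition adj (n : nat) (S F : 'M[R]_n) : 'M[R]_n := S *m F^T *m invmx S.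

Definition skew_sym (n : nat) (S F : 'M[R]_n) : Prop := adj S F = - F.

Definition is_lie (V : lmodType R) (br : V -> V -> V) : Prop :=
  [/\ (forall (a : R) u v w, br (a *: u + v) w = a *: br u w + br v w),
      (forall (a : R) u v w, br u (a *: v + w) = a *: br u v + br u w),
      (forall u, br u u = 0) &
      (forall u v w, br u (br v w) + br v (br w u) + br w (br u v) = 0)].

Definition ad0 (n : nat) (br : 'rV[R]_n -> 'rV[R]_n -> 'rV[R]_n) (v : 'rV[R]_n) : 'M[R]_n :=
  lin1_mx (br v).

Definition derivation (n : nat) (br : 'rV[R]_n -> 'rV[R]_n -> 'rV[R]_n) (D : 'M[R]_n) : Prop :=
  forall u v, br u v *m D = br (u *m D) v + br u (v *m D).

Definition cocycle2 (n : nat) (br : 'rV[R]_n -> 'rV[R]_n -> 'rV[R]_n)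
  (om : 'rV[R]_n -> 'rV[R]_n -> R) : Prop :=
  forall u v w, om (br u v) w + om (br v w) u + om (br w u) v = 0.

Definition J0 (n : nat) (S : 'M[R]_n) (br : 'rV[R]_n -> 'rV[R]_n -> 'rV[R]_n)
  (u v : 'rV[R]_n) : 'rV[R]_n := u *m adj S (ad0 br v).

Definition unimodular (V : lmodType R) (tr_ad : V -> R) : Prop := forall x, tr_ad x = 0.

(* g = R e (+) g0 (+) R ebar, represented as 'rV_(1 + n + 1):
   coordinate 0 = e-coefficient, middle block = g0-component, last = ebar-coefficient *)
Definition gmk (n : nat) (a : R) (u : 'rV[R]_n) (c : R) : 'rV[R]_(1 + n + 1) :=
  row_mx (row_mx (a%:M : 'rV[R]_1) u) (c%:M : 'rV[R]_1).
Definition ge (n : nat) (x : 'rV[R]_(1 + n + 1)) : R := (lsubmx (lsubmx x)) 0 0.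
Definition g0p (n : nat) (x : 'rV[R]_(1 + n + 1)) : 'rV[R]_n := rsubmx (lsubmx x).
Definition gbar (n : nat) (x : 'rV[R]_(1 + n + 1)) : R := (rsubmx x) 0 0.

Definition lform (n : nat) (S : 'M[R]_n) (x y : 'rV[R]_(1 + n + 1)) : R :=
  ge x * gbar y + gbar x * ge y + ip S (g0p x) (g0p y).

(* The bilinear, skew bracket on g determined by
   [ebar,e] = mu e, [ebar,u] = D u + <b,u>_0 e, [u,v] = [u,v]_0 + <K u, v>_0 e,
   [e,u] = 0, [e,e] = [ebar,ebar] = 0.  For x = a e + u + c ebar, y = a' e + v + c' ebar:
   [x,y] = (mu (c a' - a c') + c <b,v> - c' <b,u> + <K u,v>) e + ([u,v]_0 + c D v - c' D u). *)
Definition gbr (n : nat) (S : 'M[R]_n) (br : 'rV[R]_n -> 'rV[R]_n -> 'rV[R]_n)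
  (mu : R) (b : 'rV[R]_n) (K D : 'M[R]_n) (x y : 'rV[R]_(1 + n + 1)) : 'rV[R]_(1 + n + 1) :=
  let a := ge x in let u := g0p x in let c := gbar x in
  let a' := ge y in let v := g0p y in let c' := gbar y in
  gmk (mu * (c * a' - a * c') + c * ip S b v - c' * ip S b u + ip S (u *m K) v)
      (br u v + c *: (v *m D) - c' *: (u *m D))
      0.

Definition adg (n : nat) (S : 'M[R]_n) (br : 'rV[R]_n -> 'rV[R]_n -> 'rV[R]_n)
  (mu : R) (b : 'rV[R]_n) (K D : 'M[R]_n) (x : 'rV[R]_(1 + n + 1)) : 'M[R]_(1 + n + 1) :=
  lin1_mx (gbr S br mu b K D x).

End Defs.

From HB Require Import structures.
From mathcomp Require Import all_boot all_order all_algebra.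
From mathcomp Require Import ring lra.
Set Implicit Arguments.
Unset Strict Implicit.
Import Order.TTheory GRing.Theory Num.Theory.
Local Open Scope ring_scope.

(* Write x = a e + u + c ebar.  The Jacobiator of [.,.] on three such elements
   does not depend on their e-coefficients and is affine in their
   ebar-coefficients: its constant part is Jac_0 - (d omega) e, and each
   ebar-coefficient multiplies the defect of "D is a derivation" (g0-part) plus
   the defect of KD + D*K = mu K + J_b paired through < , >_0 (e-part).  So g is
   a Lie algebra iff the three defects vanish, the last one by nondegeneracy of
   < , >_0.  For (2), the diagonal of ad_x in the basis e, (e_j), ebar
   contributes mu c, tr(ad0_u) + c tr D and 0. *)

Definition jacobiator (V : zmodType) (br : V -> V -> V) (x y z : V) : V :=
  br x (br y z) + br y (br z x) + br z (br x y).

Section Coordinates.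
Variables (R : realFieldType) (n : nat).
Implicit Types (a c : R) (u v : 'rV[R]_n) (x : 'rV[R]_(1 + n + 1)).

Lemma ge_gmk a u c : ge (gmk a u c) = a.
Proof. by rewrite /ge /gmk !row_mxKl mxE eqxx mulr1n. Qed.

Lemma g0p_gmk a u c : g0p (gmk a u c) = u.
Proof. by rewrite /g0p /gmk row_mxKl row_mxKr. Qed.

Lemma gbar_gmk a u c : gbar (gmk a u c) = c.
Proof. by rewrite /gbar /gmk row_mxKr mxE eqxx mulr1n. Qed.

Lemma gmk_eta x : x = gmk (ge x) (g0p x) (gbar x).
Proof. by rewrite /gmk /ge /g0p /gbar -!mx11_scalar !hsubmxK. Qed.

Lemma gmkD a u c a' v c' : gmk a u c + gmk a' v c' = gmk (a + a') (u + v) (c + c').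
Proof. by rewrite /gmk !add_row_mx !raddfD. Qed.

Lemma gmkZ k a u c : k *: gmk a u c = gmk (k * a) (k *: u) (k * c).
Proof. by rewrite /gmk !scale_row_mx !scale_scalar_mx. Qed.

Lemma gmk0 : gmk 0 0 0 = 0 :> 'rV[R]_(1 + n + 1).
Proof. by rewrite /gmk !raddf0 !row_mx0. Qed.

Lemma lform_gmk S a u c a' v c' :
  lform S (gmk a u c) (gmk a' v c') = a * c' + c * a' + ip S u v.
Proof. by rewrite /lform !ge_gmk !g0p_gmk !gbar_gmk. Qed.

Lemma mxtrace_lin1 m (f : 'rV[R]_m -> 'rV[R]_m) :
  \tr (lin1_mx f) = \sum_i f (delta_mx 0 i) 0 i.
Proof. by apply: eq_bigr => i _; rewrite mxE. Qed.

Lemma mxtrace_lin1_gmk (f : 'rV[R]_(1 + n + 1) -> 'rV[R]_(1 + n + 1)) :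
  \tr (lin1_mx f) = ge (f (gmk 1 0 0))
                    + \sum_j g0p (f (gmk 0 (delta_mx 0 j) 0)) 0 j
                    + gbar (f (gmk 0 0 1)).
Proof.
have delta_e : delta_mx 0 (lshift 1 (lshift n ord0)) = gmk 1 0 0 :> 'rV[R]_(1 + n + 1).
  rewrite !delta_mx_lshift /gmk raddf0; congr (row_mx (row_mx _ _) _).
  by apply/rowP => i; rewrite !mxE !ord1.
have delta_g0 j : delta_mx 0 (lshift 1 (rshift 1 j)) = gmk 0 (delta_mx 0 j) 0.
  by rewrite delta_mx_lshift delta_mx_rshift /gmk raddf0.
have delta_ebar : delta_mx 0 (rshift (1 + n) ord0) = gmk 0 0 1 :> 'rV[R]_(1 + n + 1).
  rewrite delta_mx_rshift /gmk raddf0 row_mx0; congr row_mx.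
  by apply/rowP => i; rewrite !mxE !ord1.
rewrite mxtrace_lin1 big_split_ord /= big_split_ord /= !big_ord1.
rewrite delta_e delta_ebar /ge /g0p /gbar !mxE.
by congr (_ + _ + _); apply: eq_bigr => j _; rewrite delta_g0 !mxE.
Qed.

End Coordinates.

Section InnerProduct.
Variables (R : realFieldType) (n : nat) (S : 'M[R]_n).
Implicit Types (u v w : 'rV[R]_n).

Lemma ipDl u v w : ip S (u + v) w = ip S u w + ip S v w.
Proof. by rewrite /ip !mulmxDl mxE. Qed.

Lemma ipDr u v w : ip S u (v + w) = ip S u v + ip S u w.
Proof. by rewrite /ip linearD /= mulmxDr mxE. Qed.

Lemma ipZl k u w : ip S (k *: u) w = k * ip S u w.
Proof. by rewrite /ip -!scalemxAl mxE. Qed.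

Lemma ipZr k u w : ip S u (k *: w) = k * ip S u w.
Proof. by rewrite /ip linearZ /= -scalemxAr mxE. Qed.

Lemma ipNl u w : ip S (- u) w = - ip S u w.
Proof. by rewrite -scaleN1r ipZl mulN1r. Qed.

Lemma ipNr u w : ip S u (- w) = - ip S u w.
Proof. by rewrite -scaleN1r ipZr mulN1r. Qed.

Lemma ipBl u v w : ip S (u - v) w = ip S u w - ip S v w.
Proof. by rewrite ipDl ipNl. Qed.

Lemma ip0l w : ip S 0 w = 0.
Proof. by rewrite /ip !mul0mx mxE. Qed.

Lemma ip0r w : ip S w 0 = 0.
Proof. by rewrite /ip trmx0 mulmx0 mxE. Qed.

Lemma ipC u v : S^T = S -> ip S u v = ip S v u.
Proof.
move=> S_sym; rewrite /ip -[LHS]trace_mx11 -mxtrace_tr !trmx_mul trmxK S_sym.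
by rewrite trace_mx11 mulmxA.
Qed.

Lemma ip_adj F u v : S \in unitmx -> ip S (u *m adj S F) v = ip S u (v *m F).
Proof.
move=> S_unit; rewrite /ip /adj !mulmxA -(mulmxA _ (invmx S)) mulVmx // mulmx1.
by rewrite trmx_mul !mulmxA.
Qed.

Lemma ip_skew F u v : S^T = S -> S \in unitmx -> skew_sym S F ->
  ip S (u *m F) v = - ip S (v *m F) u.
Proof.
move=> S_sym S_unit F_skew.
by rewrite (ipC (v *m F) _ S_sym) -ip_adj // F_skew mulmxN ipNl opprK.
Qed.

Lemma euclidean_form_unitmx : euclidean_form S -> S \in unitmx.
Proof.
case=> _ S_pos; rewrite unitmxE unitfE; apply/negP => /det0P [v v_neq0 vS].
by move: (S_pos v v_neq0); rewrite /ip vS mul0mx mxE ltxx.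
Qed.

Lemma euclidean_form_nondeg u : euclidean_form S -> (forall v, ip S u v = 0) -> u = 0.
Proof.
by case=> _ S_pos u_ortho; apply/eqP/negPn/negP => /S_pos; rewrite u_ortho ltxx.
Qed.

End InnerProduct.

Section Bilinear.
Variables (R : realFieldType) (V : lmodType R) (br : V -> V -> V).
Hypothesis brL : forall (a : R) u v w, br (a *: u + v) w = a *: br u w + br v w.
Hypothesis brR : forall (a : R) u v w, br u (a *: v + w) = a *: br u v + br u w.
Implicit Types (u v w : V).

Lemma br0l u : br 0 u = 0.
Proof.
have /eqP := brL 1 0 0 u; rewrite scale1r addr0 scale1r -{1}[br 0 u]addr0.
by rewrite (inj_eq (addrI _)) eq_sym => /eqP.
Qed.

Lemma br0r u : br u 0 = 0.
Proof.
have /eqP := brR 1 u 0 0; rewrite scale1r addr0 scale1r -{1}[br u 0]addr0.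
by rewrite (inj_eq (addrI _)) eq_sym => /eqP.
Qed.

Lemma brDl u v w : br (u + v) w = br u w + br v w.
Proof. by have := brL 1 u v w; rewrite !scale1r. Qed.

Lemma brDr u v w : br u (v + w) = br u v + br u w.
Proof. by have := brR 1 u v w; rewrite !scale1r. Qed.

Lemma brZl k u v : br (k *: u) v = k *: br u v.
Proof. by have := brL k u 0 v; rewrite !addr0 br0l addr0. Qed.

Lemma brZr k u v : br u (k *: v) = k *: br u v.
Proof. by have := brR k u v 0; rewrite !addr0 br0r addr0. Qed.

Lemma brNr u v : br u (- v) = - br u v.
Proof. by rewrite -scaleN1r brZr scaleN1r. Qed.

Lemma brC : (forall u, br u u = 0) -> forall u v, br u v = - br v u.
Proof.
move=> brxx u v; apply/eqP; rewrite -addr_eq0.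
by have := brxx (u + v); rewrite brDl !brDr !brxx add0r addr0 => ->.
Qed.

End Bilinear.

Section Extension.
Variables (R : realFieldType) (n : nat) (S : 'M[R]_n).
Variable br : 'rV[R]_n -> 'rV[R]_n -> 'rV[R]_n.
Variables (mu : R) (b : 'rV[R]_n) (K D : 'M[R]_n).
Hypothesis brL : forall (a : R) u v w, br (a *: u + v) w = a *: br u w + br v w.
Hypothesis brR : forall (a : R) u v w, br u (a *: v + w) = a *: br u v + br u w.
Hypothesis brxx : forall u, br u u = 0.
Hypothesis S_euclid : euclidean_form S.
Hypothesis K_skew : skew_sym S K.
Hypothesis brJ : forall u v w, jacobiator br u v w = 0.
Implicit Types (u v w : 'rV[R]_n) (x y z : 'rV[R]_(1 + n + 1)).

Local Notation gb := (gbr S br mu b K D).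
Local Notation om := (fun u v => ip S (u *m K) v).

Let S_sym : S^T = S := proj1 S_euclid.
Let S_unit : S \in unitmx := euclidean_form_unitmx S_euclid.

Lemma mul_ad0 u v : v *m ad0 br u = br u v.
Proof.
rewrite [v in RHS]row_sum_delta (big_morph _ (brDr brR u) (br0r brR u)).
apply/rowP => i; rewrite mxE summxE; apply: eq_bigr => j _.
by rewrite (brZr brR) !mxE.
Qed.

Lemma ad0_0 : ad0 br 0 = 0.
Proof. by apply/matrixP => i j; rewrite !mxE (br0l brL) mxE. Qed.

Definition derivation_defect u v := br u v *m D - (br (u *m D) v + br u (v *m D)).

Definition cocycle_defect u v w := om (br u v) w + om (br v w) u + om (br w u) v.

Definition compat_defect u v :=
  mu * ip S (u *m K) v + ip S b (br u v) - ip S (u *m K) (v *m D) + ip S (v *m K) (u *m D).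

Lemma gbr_gmk a u c a' v c' : gb (gmk a u c) (gmk a' v c') =
  gmk (mu * (c * a' - a * c') + c * ip S b v - c' * ip S b u + ip S (u *m K) v)
      (br u v + c *: (v *m D) - c' *: (u *m D)) 0.
Proof. by rewrite /gbr !ge_gmk !g0p_gmk !gbar_gmk. Qed.

Lemma gbr_linearl k x y z : gb (k *: x + y) z = k *: gb x z + gb y z.
Proof.
rewrite [x]gmk_eta [y]gmk_eta [z]gmk_eta gmkZ gmkD !gbr_gmk gmkZ gmkD.
congr gmk; last by rewrite mulr0 addr0.
  by rewrite !mulmxDl -!scalemxAl !(ipDl, ipZl, ipDr, ipZr); ring.
rewrite (brDl brL) (brZl brL) !(mulmxDl, scalerDr) -!scalemxAl.
by apply/rowP => j; rewrite !mxE; ring.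
Qed.

Lemma gbr_linearr k x y z : gb z (k *: x + y) = k *: gb z x + gb z y.
Proof.
rewrite [x]gmk_eta [y]gmk_eta [z]gmk_eta gmkZ gmkD !gbr_gmk gmkZ gmkD.
congr gmk; last by rewrite mulr0 addr0.
  by rewrite !(ipDl, ipZl, ipDr, ipZr); ring.
rewrite (brDr brR) (brZr brR) !(mulmxDl, scalerDr) -!scalemxAl.
by apply/rowP => j; rewrite !mxE; ring.
Qed.

Lemma gbrxx x : gb x x = 0.
Proof.
rewrite [x]gmk_eta gbr_gmk -gmk0; congr gmk; last by rewrite brxx add0r subrr.
have /eqP := ip_skew (g0p x) (g0p x) S_sym S_unit K_skew.
rewrite -addr_eq0 -mulr2n mulrn_eq0 /= => /eqP ->; ring.
Qed.

Lemma jacobiator_gbr_gmk a u c a' v c' a'' w c'' :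
  jacobiator gb (gmk a u c) (gmk a' v c') (gmk a'' w c'') =
  gmk (- cocycle_defect u v w
         + c * compat_defect v w + c' * compat_defect w u + c'' * compat_defect u v)
      (jacobiator br u v w + c *: derivation_defect v w
         + c' *: derivation_defect w u + c'' *: derivation_defect u v) 0.
Proof.
rewrite /jacobiator !gbr_gmk !gmkD; congr gmk; last by rewrite !addr0.
  rewrite /cocycle_defect /compat_defect.
  rewrite !(ip_skew (br _ _) _ S_sym S_unit K_skew) !(ipDr, ipNr, ipZr); ring.
rewrite /derivation_defect !(brC brL brR brxx (_ *m D)).
rewrite !(brDr brR, brNr brR, brZr brR) !(mulmxDl, mulNmx) -!scalemxAl.
by apply/rowP => j; rewrite !mxE; ring.
Qed.

Lemma ip_compat_defect u v :
  ip S (u *m D *m K + u *m K *m adj S D - (mu *: (u *m K) + J0 S br b u)) v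
  = - compat_defect u v.
Proof.
rewrite /compat_defect /J0 !(ipDl, ipNl, ipZl) !ip_adj // mul_ad0.
by rewrite (ip_skew (u *m D) _ S_sym S_unit K_skew); ring.
Qed.

Lemma derivation_defectP : derivation br D <-> forall u v, derivation_defect u v = 0.
Proof.
split=> [der_D u v | defect0 u v]; first by rewrite /derivation_defect der_D subrr.
by apply/eqP; rewrite -subr_eq0 -[_ - _]/(derivation_defect u v) defect0.
Qed.

Lemma compat_defectP :
  (forall u, u *m D *m K + u *m K *m adj S D = mu *: (u *m K) + J0 S br b u) <->
  forall u v, compat_defect u v = 0.
Proof.
split=> [compat u v | defect0 u].
  by rewrite -[LHS]opprK -ip_compat_defect compat subrr ip0l oppr0.
apply/eqP; rewrite -subr_eq0; apply/eqP/(euclidean_form_nondeg S_euclid) => v.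
by rewrite ip_compat_defect defect0 oppr0.
Qed.

Lemma is_lie_gbrE : is_lie gb <-> forall x y z, jacobiator gb x y z = 0.
Proof.
split=> [[_ _ _ gbJ] x y z | gbJ]; first exact: gbJ.
split; [exact: gbr_linearl | by move=> *; apply: gbr_linearr | exact: gbrxx | exact: gbJ].
Qed.

Lemma jacobiator_gbr_eq0P : (forall x y z, jacobiator gb x y z = 0) <->
  [/\ forall u v, derivation_defect u v = 0,
      forall u v w, cocycle_defect u v w = 0 &
      forall u v, compat_defect u v = 0].
Proof.
split=> [gbJ | [der0 coc0 compat0] x y z].
  have g0p0 : g0p (0 : 'rV[R]_(1 + n + 1)) = 0 by rewrite -gmk0 g0p_gmk.
  have ge0 : ge (0 : 'rV[R]_(1 + n + 1)) = 0 by rewrite -gmk0 ge_gmk.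
  have jac_ebar u v := etrans (esym (jacobiator_gbr_gmk 0 0 1 0 u 0 0 v 0)) (gbJ _ _ _).
  split; [move=> u v | move=> u v w | move=> u v].
  - have := congr1 (@g0p _ n) (jac_ebar u v); rewrite g0p_gmk g0p0 /jacobiator.
    by rewrite !(br0l brL) !(br0r brR) addr0 !add0r !scale0r scale1r !addr0.
  - have := congr1 (@ge _ n) (gbJ (gmk 0 u 0) (gmk 0 v 0) (gmk 0 w 0)).
    by rewrite jacobiator_gbr_gmk ge_gmk ge0 !mul0r !addr0 => /eqP; rewrite oppr_eq0 => /eqP.
  - have := congr1 (@ge _ n) (jac_ebar u v); rewrite ge_gmk ge0 /cocycle_defect.
    by rewrite (br0l brL) (br0r brR) mul0mx !ip0l ip0r !mul0r mul1r !addr0 oppr0 add0r.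
rewrite [x]gmk_eta [y]gmk_eta [z]gmk_eta jacobiator_gbr_gmk.
by rewrite !der0 !coc0 !compat0 brJ !mulr0 !scaler0 oppr0 !addr0 gmk0.
Qed.

Lemma is_lie_gbrP : is_lie gb <->
  [/\ derivation br D, cocycle2 br om &
      forall u, u *m D *m K + u *m K *m adj S D = mu *: (u *m K) + J0 S br b u].
Proof.
split=> [/is_lie_gbrE/jacobiator_gbr_eq0P[der0 coc0 compat0] | [der_D coc compat]].
  by split; [exact/derivation_defectP | exact: coc0 | exact/compat_defectP].
apply/is_lie_gbrE/jacobiator_gbr_eq0P.
by split; [exact/derivation_defectP | exact: coc | exact/compat_defectP].
Qed.

Lemma mxtrace_adg x :
  \tr (adg S br mu b K D x) = (mu + \tr D) * gbar x + \tr (ad0 br (g0p x)).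
Proof.
rewrite [x]gmk_eta; move: (ge x) (g0p x) (gbar x) => a u c.
rewrite g0p_gmk gbar_gmk /adg mxtrace_lin1_gmk !gbr_gmk ge_gmk gbar_gmk !ip0r.
under eq_bigr => j _ do rewrite gbr_gmk g0p_gmk scale0r subr0 -rowE !mxE.
rewrite big_split /= -mulr_sumr mxtrace_lin1.
by rewrite [\tr D]/mxtrace; ring.
Qed.

Lemma adg_trace_form H H0 :
  (forall x, \tr (adg S br mu b K D x) = lform S H x) ->
  (forall v, \tr (ad0 br v) = ip S H0 v) ->
  H = gmk (mu + \tr D) H0 0.
Proof.
move=> trH trH0; rewrite [H]gmk_eta in trH *.
move: (ge H) (g0p H) (gbar H) trH => a u c trH; congr gmk.
- have := trH (gmk 0 0 1); rewrite mxtrace_adg lform_gmk gbar_gmk g0p_gmk.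
  by rewrite ad0_0 mxtrace0 ip0r; lra.
- apply/eqP; rewrite -subr_eq0; apply/eqP/(euclidean_form_nondeg S_euclid) => v.
  have := trH (gmk 0 v 0); rewrite mxtrace_adg lform_gmk gbar_gmk g0p_gmk.
  by rewrite trH0 ipBl; lra.
- have := trH (gmk 1 0 0); rewrite mxtrace_adg lform_gmk gbar_gmk g0p_gmk.
  by rewrite ad0_0 mxtrace0 ip0r; lra.
Qed.

Lemma unimodular_gbrP :
  unimodular (fun x => \tr (adg S br mu b K D x)) <->
  unimodular (fun v => \tr (ad0 br v)) /\ \tr D = - mu.
Proof.
split=> [unimod | [unimod0 trD] x]; last by rewrite mxtrace_adg unimod0 trD addrN mul0r addr0.
split=> [v|].
  by have := unimod (gmk 0 v 0); rewrite mxtrace_adg gbar_gmk g0p_gmk mulr0 add0r.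
have := unimod (gmk 0 0 1); rewrite mxtrace_adg gbar_gmk g0p_gmk ad0_0 mxtrace0.
by rewrite mulr1 addr0; lra.
Qed.

End Extension.

Theorem proposition4p1 (R : realFieldType) (n : nat) (S : 'M[R]_n)
  (br : 'rV[R]_n -> 'rV[R]_n -> 'rV[R]_n) (mu : R) (b : 'rV[R]_n) (K D : 'M[R]_n) :
  euclidean_form S -> is_lie br -> skew_sym S K ->
  (* (1) *)
  (is_lie (gbr S br mu b K D) <->
     [/\ derivation br D,
         cocycle2 br (fun u v => ip S (u *m K) v) &
         (forall u, (u *m D) *m K + (u *m K) *m adj S D = mu *: (u *m K) + J0 S br b u)])
  /\
  (* (2) *)
  (is_lie (gbr S br mu b K D) ->
     (forall (H : 'rV[R]_(1 + n + 1)) (H0 : 'rV[R]_n),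
        (forall x, \tr (adg S br mu b K D x) = lform S H x) ->
        (forall v, \tr (ad0 br v) = ip S H0 v) ->
        H = gmk (mu + \tr D) H0 0)
     /\
     (unimodular (fun x => \tr (adg S br mu b K D x)) <->
        unimodular (fun v => \tr (ad0 br v)) /\ \tr D = - mu)).
Proof.
move=> S_euclid [brL brR brxx brJ] K_skew; split.
  exact: is_lie_gbrP.
move=> _; split; first exact: adg_trace_form.
exact: unimodular_gbrP.
Qed.
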